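(* Let ${\mathbb X}$ be a real inner product space with ${\mathbb X}\ne\{0\}$, let $M\colon[0,\infty)\times[0,\infty)\to[0,\infty)$ be symmetric and moderately increasing, and suppose $\rho_M(x,y)=\dfrac{\Vert x-y\Vert}{M(\Vert x\Vert,\Vert y\Vert)}$ is a metric on ${\mathbb X}$. Then $\rho_M$ is locally star--shaped.
   Context: Convention $0/0=0$. A function $f\colon[0,\infty)\to[0,\infty)$ is moderately increasing if it is increasing and $f(t)/t$ is decreasing; $M$ is moderately increasing if $M(x,\cdot)$ and $M(\cdot,x)$ are moderately increasing for each fixed $x$. A metric $d$ is locally star--shaped if for every $x$ there is $r_0>0$ such that for every $0<r<r_0$ the ball $B_d(x,r)=\{y: d(x,y)<r\}$ is star--shaped with respect to $x$, i.e. every ray emanating from $x$ meets $\partial B_d(x,r)$ exactly once. *)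

From HB Require Import structures.
From mathcomp Require Import all_boot all_order all_algebra.
From mathcomp Require Import reals.
Set Implicit Arguments. Unset Strict Implicit. Unset Printing Implicit Defensive.
Import Order.TTheory GRing.Theory Num.Theory.
Local Open Scope ring_scope.

Definition is_inner_product (R : realType) (V : lmodType R) (ip : V -> V -> R) : Prop :=
  [/\ (forall x y, ip x y = ip y x),
      (forall (a : R) x y z, ip (a *: x + y) z = a * ip x z + ip y z),
      (forall x, 0 <= ip x x) &
      (forall x, ip x x = 0 -> x = 0)].

Definition ipnorm (R : realType) (V : lmodType R) (ip : V -> V -> R) (x : V) : R :=
  Num.sqrt (ip x x).

Definition moderately_increasing (R : realType) (f : R -> R) : Prop :=
  (forall s t, 0 <= s -> s <= t -> f s <= f t) /\
  (forall s t, 0 < s -> s <= t -> f t / t <= f s / s).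

Definition moderately_increasing2 (R : realType) (M : R -> R -> R) : Prop :=
  forall x, 0 <= x ->
    moderately_increasing (fun t => M x t) /\ moderately_increasing (fun t => M t x).

(* rho_M(x,y) = ||x - y|| / M(||x||, ||y||)  (x / 0 = 0 in MathComp, i.e. 0/0 = 0). *)
Definition rhoM (R : realType) (V : lmodType R) (ip : V -> V -> R)
    (M : R -> R -> R) (x y : V) : R :=
  ipnorm ip (x - y) / M (ipnorm ip x) (ipnorm ip y).

Definition is_metric (T : Type) (R : realType) (d : T -> T -> R) : Prop :=
  [/\ (forall x y, 0 <= d x y),
      (forall x y, d x y = 0 <-> x = y),
      (forall x y, d x y = d y x) &
      (forall x y z, d x z <= d x y + d y z)].

Definition on_ball_boundary (R : realType) (V : lmodType R) (ip : V -> V -> R)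
    (d : V -> V -> R) (x : V) (r : R) (y : V) : Prop :=
  forall e : R, 0 < e ->
    (exists z, ipnorm ip (z - y) < e /\ d x z < r) /\
    (exists w, ipnorm ip (w - y) < e /\ ~ (d x w < r)).

Definition ball_star_shaped (R : realType) (V : lmodType R) (ip : V -> V -> R)
    (d : V -> V -> R) (x : V) (r : R) : Prop :=
  forall u : V, u <> 0 ->
    exists t : R, (0 <= t /\ on_ball_boundary ip d x r (x + t *: u)) /\
      forall t' : R, 0 <= t' -> on_ball_boundary ip d x r (x + t' *: u) -> t' = t.

Definition locally_star_shaped (R : realType) (V : lmodType R) (ip : V -> V -> R)
    (d : V -> V -> R) : Prop :=
  forall x : V, exists r0 : R, 0 < r0 /\
    forall r : R, 0 < r -> r < r0 -> ball_star_shaped ip d x r.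

(* For the centre 0, rho(0, w) = N w / M(0, N w) is a nondecreasing function of N w,
   because s / M(0, s) is nondecreasing when M(0, .) is moderately increasing; so on a ray
   x + t u the points inside the ball are those before the supremum c of such parameters,
   with open neighbourhoods on both sides of c.
   For a centre x <> 0 with a := N x, the moderate growth of M(a, .) gives three facts:
   t |-> rho(x, x + t u) is strictly increasing while 2 t N u < a; rho(x, y) >= a / (4 M(a, a))
   as soon as N (y - x) >= a / 3; and rho(x, .) is continuous at every y <> 0. For
   r < a / (4 M(a, a)) the ray therefore stays inside the ball for t < c and outside it
   for t > c, each with an open neighbourhood, so x + c u is its only boundary point. *)
From HB Require Import structures.
From mathcomp Require Import all_boot all_order all_algebra.
From mathcomp Require Import reals.
From mathcomp Require Import classical_sets ring lra.
Import Order.TTheory GRing.Theory Num.Theory.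
Local Open Scope ring_scope.

Lemma ipnorm_ge0 {R : realType} {V : lmodType R} (ip : V -> V -> R) x : 0 <= ipnorm ip x.
Proof. exact: sqrtr_ge0. Qed.

Section InnerProductNorm.
Context {R : realType} {V : lmodType R} {ip : V -> V -> R}.
Hypothesis ip_inner : is_inner_product ip.
Local Notation N := (ipnorm ip).

Lemma ipC x y : ip x y = ip y x. Proof. by case: ip_inner. Qed.

Lemma ipDl x y z : ip (x + y) z = ip x z + ip y z.
Proof. by case: ip_inner => _ ipL _ _; have := ipL 1 x y z; rewrite scale1r mul1r. Qed.

Lemma ip0l z : ip 0 z = 0.
Proof. have := ipDl 0 0 z; rewrite addr0; lra. Qed.

Lemma ipZl a x z : ip (a *: x) z = a * ip x z.
Proof. by case: ip_inner => _ ipL _ _; have := ipL a x 0 z; rewrite addr0 ip0l addr0. Qed.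

Lemma ipDr x y z : ip z (x + y) = ip z x + ip z y.
Proof. by rewrite ipC ipDl ![ip _ z]ipC. Qed.

Lemma ipZr a x z : ip z (a *: x) = a * ip z x.
Proof. by rewrite ipC ipZl ipC. Qed.

Lemma ip0r z : ip z 0 = 0. Proof. by rewrite ipC ip0l. Qed.

Lemma ipxx_ge0 x : 0 <= ip x x. Proof. by case: ip_inner. Qed.

Lemma ipnorm_sqr x : N x ^+ 2 = ip x x. Proof. by rewrite sqr_sqrtr ?ipxx_ge0. Qed.

Lemma ipnorm0 : N 0 = 0. Proof. by rewrite /ipnorm ip0l sqrtr0. Qed.

Lemma ipnorm_gt0 {x} : x <> 0 -> 0 < N x.
Proof.
move=> x0; rewrite lt_def ipnorm_ge0 andbT sqrtr_eq0 -ltNge lt_def ipxx_ge0 andbT.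
by apply/eqP; case: ip_inner => _ _ _ /(_ x) xx0 /xx0.
Qed.

Lemma ipnormZ a x : N (a *: x) = `|a| * N x.
Proof. by rewrite /ipnorm ipZl ipZr mulrA -expr2 sqrtrM ?sqr_ge0 // sqrtr_sqr. Qed.

Lemma ipnormN x : N (- x) = N x.
Proof. by rewrite -scaleN1r ipnormZ normrN normr1 mul1r. Qed.

Lemma ipnormB x y : N (x - y) = N (y - x).
Proof. by rewrite -ipnormN opprB. Qed.

Lemma ip_norm_le x y : `|ip x y| <= N x * N y.
Proof.
have [->|y0] := eqVneq y 0; first by rewrite ip0r ipnorm0 mulr0 normr0.
set b := ip y y; set c := ip x y.
have b_gt0 : 0 < b by rewrite /b -ipnorm_sqr exprn_gt0 ?ipnorm_gt0 //; apply/eqP.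
(* Expand 0 <= <b x - c y, b x - c y> = b (b <x,x> - c^2). *)
have := ipxx_ge0 (b *: x + (- c) *: y).
rewrite ipDl !ipDr !ipZl !ipZr [ip y x]ipC -/b -/c => expansion.
have c2_le : c ^+ 2 <= (N x * N y) ^+ 2.
  rewrite exprMn !ipnorm_sqr -/b; nra.
have := mulr_ge0 (ipnorm_ge0 ip x) (ipnorm_ge0 ip y).
rewrite ler_norml; move: c2_le; set P := N x * N y => c2_le P_ge0.
apply/andP; split; nra.
Qed.

Lemma ipnormD x y : N (x + y) <= N x + N y.
Proof.
rewrite -[N x + N y]ger0_norm ?addr_ge0 ?ipnorm_ge0 // -sqrtr_sqr ler_wsqrtr //.
rewrite sqrrD !ipnorm_sqr ipDl !ipDr [ip y x]ipC.
have := ler_norm (ip x y); have := ip_norm_le x y; lra.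
Qed.

Lemma ipnorm_dist x y : `|N x - N y| <= N (x - y).
Proof.
have := ipnormD (x - y) y; have := ipnormD (y - x) x.
rewrite !subrK ipnormB ler_norml => ? ?; apply/andP; split; lra.
Qed.

Lemma ipnorm_subl_dist x y w : `|N (x - w) - N (x - y)| <= N (w - y).
Proof.
have := ipnorm_dist (x - w) (x - y).
by rewrite [x - w - _]addrC opprB subrKA [N (y - w)]ipnormB.
Qed.

Lemma ipnorm_ray_dist x u s t : N (x + s *: u - (x + t *: u)) = `|s - t| * N u.
Proof. by rewrite opprD addrACA subrr add0r -scalerBl ipnormZ. Qed.

Lemma ipnorm_ray x u t : N (x + t *: u - x) = `|t| * N u.
Proof. by rewrite addrC addKr ipnormZ. Qed.

Lemma ipnorm_ray_ge x u t : 0 <= t -> N x - t * N u <= N (x + t *: u).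
Proof.
move=> t_ge0; have := ipnorm_dist (x + t *: u) x.
by rewrite ipnorm_ray (ger0_norm t_ge0) ler_norml => /andP[? _]; lra.
Qed.

End InnerProductNorm.

Section ModeratelyIncreasing.
Context {R : realType} {g : R -> R}.
Hypotheses (g_mi : moderately_increasing g) (g_ge0 : forall s, 0 <= s -> 0 <= g s).

Lemma mi_ratio s s' : 0 < s -> s <= s' -> g s' * s <= g s * s'.
Proof.
move=> s_gt0 le_ss'; have s'_gt0 := lt_le_trans s_gt0 le_ss'.
by have := g_mi.2 s s' s_gt0 le_ss'; rewrite ler_pdivrMr // mulrAC ler_pdivlMr.
Qed.

Lemma mi_upper_near s s' e : 0 < s -> 0 <= s' -> `|s' - s| <= e ->
  g s' * s <= g s * (s + e).
Proof.
move=> s_gt0 s'_ge0; rewrite ler_norml => /andP[? ?].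
have := g_ge0 _ (ltW s_gt0); have [le_s's|lt_ss'] := lerP s' s.
  by have := g_mi.1 _ _ s'_ge0 le_s's; nra.
by have := mi_ratio _ _ s_gt0 (ltW lt_ss'); nra.
Qed.

Lemma mi_lower_near s s' e : 0 < s -> 0 <= s' -> `|s' - s| <= e ->
  g s * (s - e) <= g s' * s.
Proof.
move=> s_gt0 s'_ge0; rewrite ler_norml => /andP[? ?].
have := g_ge0 _ (ltW s_gt0); have [le_ss'|lt_s's] := lerP s s'.
  by have := g_mi.1 _ _ (ltW s_gt0) le_ss'; nra.
have := g_ge0 _ s'_ge0; have [s'_eq0|s'_neq0] := eqVneq s' 0.
  by rewrite s'_eq0 in lt_s's *; nra.
have s'_gt0 : 0 < s' by rewrite lt_def s'_neq0.
by have := mi_ratio _ _ s'_gt0 (ltW lt_s's); nra.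
Qed.

Lemma divr_mi_homo s s' : 0 <= s -> s <= s' -> s / g s <= s' / g s'.
Proof.
move=> s_ge0 le_ss'; have s'_ge0 := le_trans s_ge0 le_ss'.
have rhs_ge0 : 0 <= s' / g s' by rewrite divr_ge0 ?g_ge0.
have [->|s_gt0] := eqVneq s 0; first by rewrite mul0r.
have [gs0|gs_gt0] := eqVneq (g s) 0; first by rewrite gs0 invr0 mulr0.
have gs_pos : 0 < g s by rewrite lt_def gs_gt0 g_ge0.
have gs'_pos := lt_le_trans gs_pos (g_mi.1 _ _ s_ge0 le_ss').
have s_pos : 0 < s by rewrite lt_def s_gt0.
rewrite ler_pdivrMr // mulrAC ler_pdivlMr //.
by have := mi_ratio _ _ s_pos le_ss'; nra.
Qed.

End ModeratelyIncreasing.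

Lemma ray_threshold {R : realType} {f : R -> R} {r B : R} :
  f 0 < r -> (forall t, B <= t -> r <= f t) ->
  exists c, [/\ 0 <= c, c <= B, (forall t, c < t -> r <= f t) &
    (forall t, t < c -> exists t2, [/\ t < t2, t2 <= c & f t2 < r])].
Proof.
move=> f0_lt far_ge.
pose S := fun t => 0 <= t /\ f t < r.
have S0 : S 0 by [].
have B_ub : ubound S B.
  by move=> t [_ ft_lt]; rewrite leNgt; apply/negP => /ltW /far_ge; lra.
have S_ub : has_ubound S by exists B.
have S_le_sup := ub_le_sup S_ub.
have sup_ge0 : 0 <= sup S := S_le_sup 0 S0.
exists (sup S); split => //.
- by apply: ge_sup => //; exists 0.
- move=> t lt_sup_t; rewrite leNgt; apply/negP => ft_lt.
  have : t <= sup S by apply: S_le_sup; split => //; exact: le_trans (ltW lt_sup_t).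
  by rewrite leNgt lt_sup_t.
- move=> t /(sup_gt (ex_intro _ 0 S0)) [t2 S_t2 lt_tt2].
  by exists t2; split => //; [exact: S_le_sup | case: S_t2].
Qed.

Definition ball_interior {R : realType} {V : lmodType R} (ip : V -> V -> R)
    (d : V -> V -> R) (x : V) (r : R) (y : V) : Prop :=
  exists2 e, 0 < e & forall w, ipnorm ip (w - y) < e -> d x w < r.

Definition ball_exterior {R : realType} {V : lmodType R} (ip : V -> V -> R)
    (d : V -> V -> R) (x : V) (r : R) (y : V) : Prop :=
  exists2 e, 0 < e & forall w, ipnorm ip (w - y) < e -> r <= d x w.

Section RayBoundary.
Context {R : realType} {V : lmodType R} {ip : V -> V -> R}.
Context {d : V -> V -> R} {x : V} {r : R}.
Hypothesis ip_inner : is_inner_product ip.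
Local Notation N := (ipnorm ip).

Lemma interior_not_boundary y : ball_interior ip d x r y -> ~ on_ball_boundary ip d x r y.
Proof.
move=> [e e_gt0 inside] /(_ e e_gt0) [_ [w [near_w]]].
by rewrite inside.
Qed.

Lemma exterior_not_boundary y : ball_exterior ip d x r y -> ~ on_ball_boundary ip d x r y.
Proof.
move=> [e e_gt0 outside] /(_ e e_gt0) [[w [/outside]]].
by rewrite leNgt => /negP.
Qed.

Lemma ray_meets_boundary_once {u c} : 0 <= c -> d x x < r ->
  (forall t, 0 <= t -> t < c -> ball_interior ip d x r (x + t *: u)) ->
  (forall t, c < t -> ball_exterior ip d x r (x + t *: u)) ->
  exists t, (0 <= t /\ on_ball_boundary ip d x r (x + t *: u)) /\
    forall t', 0 <= t' -> on_ball_boundary ip d x r (x + t' *: u) -> t' = t.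
Proof.
move=> c_ge0 center_in inside outside; exists c; split; last first.
  move=> t' t'_ge0 bd; case: (ltgtP t' c) => [lt_t'c|lt_ct'|//].
    by exfalso; exact: interior_not_boundary (inside _ t'_ge0 lt_t'c) bd.
  by exfalso; exact: exterior_not_boundary (outside _ lt_ct') bd.
split=> // e e_gt0.
have Nu_ge0 := ipnorm_ge0 ip u.
pose h := e / (N u + 1).
have h_gt0 : 0 < h by rewrite divr_gt0 // ltr_pwDr.
have h_close : h * N u < e.
  by rewrite /h mulrAC ltr_pdivrMr ?ltr_pwDr // ltr_pM2l ?ltrDl.
split.
- have [c_eq0|c_gt0] := eqVneq c 0.
    exists x; rewrite c_eq0 scale0r addr0 subrr ipnorm0 //.
  have c_pos : 0 < c by rewrite lt_def c_gt0.
  pose h' := Num.min c h.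
  have h'_gt0 : 0 < h' by rewrite lt_min c_pos.
  have [h'_le_c h'_le_h] : h' <= c /\ h' <= h by rewrite !ge_min !lexx orbT.
  exists (x + (c - h') *: u); split.
    rewrite ipnorm_ray_dist // (_ : c - h' - c = - h'); last by ring.
    by rewrite normrN gtr0_norm //; apply: le_lt_trans h_close; rewrite ler_wpM2r.
  have [e' e'_gt0 in_ball] : ball_interior ip d x r (x + (c - h') *: u).
    by apply: inside; rewrite ?subr_ge0 // ltrBlDr ltrDl.
  by apply: in_ball; rewrite subrr ipnorm0.
- have [e' e'_gt0 out_ball] : ball_exterior ip d x r (x + (c + h) *: u).
    by apply: outside; rewrite ltrDl.
  exists (x + (c + h) *: u); split.
    by rewrite ipnorm_ray_dist // addrC addKr gtr0_norm.
  by rewrite ltNge out_ball // subrr ipnorm0.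
Qed.

End RayBoundary.

Definition locally_star_shaped_at {R : realType} {V : lmodType R}
    (ip : V -> V -> R) (d : V -> V -> R) (x : V) : Prop :=
  exists r0, 0 < r0 /\ forall r, 0 < r -> r < r0 -> ball_star_shaped ip d x r.

Section RhoMBalls.
Context {R : realType} {V : lmodType R} {ip : V -> V -> R} {M : R -> R -> R} {x : V}.
Hypothesis ip_inner : is_inner_product ip.
Local Notation N := (ipnorm ip).
Local Notation rho := (rhoM ip M).
Local Notation g := (M (N x)).
Hypotheses (g_mi : moderately_increasing g) (g_ge0 : forall s, 0 <= s -> 0 <= g s).
Hypothesis g_gt0 : forall y, y <> x -> 0 < g (N y).

Lemma rhoM_xx y : rho y y = 0.
Proof. by rewrite /rhoM subrr ipnorm0 // mul0r. Qed.

Lemma rhoM_lt_near r y : 0 < N y -> 0 < g (N y) -> rho x y < r ->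
  ball_interior ip rho x r y.
Proof.
set s := N y; set m := g s; set d := N (x - y) => s_gt0 m_gt0.
rewrite /rhoM -/d -/s -/m ltr_pdivrMr // => d_lt.
have d_ge0 : 0 <= d := ipnorm_ge0 ip _.
have rm_gt0 : 0 < r * m by lra.
(* For [e] below this radius, [(d + e) s < r m (s - e)]; here [d + e] bounds [N (x - w)]
   and [m (s - e) <= g (N w) s]. *)
exists (s * (r * m - d) / (s + r * m)) => [|w].
  by rewrite divr_gt0 ?mulr_gt0 ?subr_gt0 ?addr_gt0.
set e := N (w - y); rewrite ltr_pdivlMr ?addr_gt0 // => e_small.
have e_ge0 : 0 <= e := ipnorm_ge0 ip _.
have dxw_near := ipnorm_subl_dist ip_inner x y w.
have Nw_near := ipnorm_dist ip_inner w y.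
have gw_ge := mi_lower_near g_mi g_ge0 _ _ _ s_gt0 (ipnorm_ge0 ip w) Nw_near.
move: dxw_near gw_ge; rewrite -/d -/e -/m ler_norml => /andP[_ dxw_le] gw_ge.
have e_lt_s : e < s by nra.
have gw_gt0 : 0 < g (N w).
  by rewrite -(pmulr_lgt0 _ s_gt0); apply: lt_le_trans gw_ge; rewrite mulr_gt0 ?subr_gt0.
have r_gt0 : 0 < r by rewrite -(pmulr_lgt0 _ m_gt0).
rewrite /rhoM ltr_pdivrMr // -(ltr_pM2r s_gt0).
have := ler_wpM2l (ltW r_gt0) gw_ge; have := ler_wpM2r (ltW s_gt0) dxw_le; nra.
Qed.

Lemma rhoM_gt_near r y : 0 <= r -> 0 < N y -> 0 < g (N y) -> r < rho x y ->
  ball_exterior ip rho x r y.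
Proof.
set s := N y; set m := g s; set d := N (x - y) => r_ge0 s_gt0 m_gt0.
rewrite /rhoM -/d -/s -/m ltr_pdivlMr // => lt_d.
have rm_ge0 : 0 <= r * m by rewrite mulr_ge0 // ltW.
exists (Num.min s (s * (d - r * m) / (s + r * m))) => [|w].
  by rewrite lt_min s_gt0 divr_gt0 ?mulr_gt0 ?subr_gt0 ?ltr_wpDr.
set e := N (w - y); rewrite lt_min => /andP[e_lt_s].
rewrite ltr_pdivlMr ?ltr_wpDr // => e_small.
have dxw_near := ipnorm_subl_dist ip_inner x y w.
have Nw_near := ipnorm_dist ip_inner w y.
have gw_ge := mi_lower_near g_mi g_ge0 _ _ _ s_gt0 (ipnorm_ge0 ip w) Nw_near.
have gw_le := mi_upper_near g_mi g_ge0 _ _ _ s_gt0 (ipnorm_ge0 ip w) Nw_near.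
move: dxw_near gw_ge gw_le; rewrite -/d -/e -/m ler_norml => /andP[dxw_ge _] gw_ge gw_le.
have gw_gt0 : 0 < g (N w).
  by rewrite -(pmulr_lgt0 _ s_gt0); apply: lt_le_trans gw_ge; rewrite mulr_gt0 ?subr_gt0.
rewrite /rhoM ler_pdivlMr // -(ler_pM2r s_gt0).
have := ler_wpM2l r_ge0 gw_le; have := ler_wpM2r (ltW s_gt0) dxw_ge; nra.
Qed.

Lemma g_gt0_off_origin : x <> 0 -> forall s, 0 <= s -> 0 < g s.
Proof.
move=> x_neq0 s s_ge0; have := g_gt0 _ (nesym x_neq0); rewrite ipnorm0 // => g0_gt0.
exact: lt_le_trans g0_gt0 (g_mi.1 _ _ (lexx 0) s_ge0).
Qed.

Lemma rhoM_far y : x <> 0 -> N x / 3 <= N (y - x) -> N x / (4 * g (N x)) <= rho x y.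
Proof.
move=> x_neq0 far.
have a_gt0 := ipnorm_gt0 ip_inner x_neq0.
have ga_gt0 := g_gt0_off_origin x_neq0 _ (ipnorm_ge0 ip x).
have gy_gt0 := g_gt0_off_origin x_neq0 _ (ipnorm_ge0 ip y).
have := mi_upper_near g_mi g_ge0 _ _ _ a_gt0 (ipnorm_ge0 ip y) (ipnorm_dist ip_inner y x).
rewrite /rhoM [N (x - y)]ipnormB // ler_pdivrMr ?mulr_gt0 // mulrAC ler_pdivlMr //; nra.
Qed.

Lemma rhoM_ray_lt u t t' : x <> 0 -> u <> 0 -> 0 <= t -> t < t' -> 2 * (t * N u) < N x ->
  rho x (x + t *: u) < rho x (x + t' *: u).
Proof.
move=> x_neq0 u_neq0 t_ge0 lt_tt' small.
have Nu_gt0 := ipnorm_gt0 ip_inner u_neq0.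
have t'_gt0 := le_lt_trans t_ge0 lt_tt'.
have := ipnorm_ray_ge ip_inner x u t t_ge0.
set s := N (x + t *: u); set s' := N (x + t' *: u) => s_ge.
have s_gt0 : 0 < s by nra.
have near : `|s' - s| <= (t' - t) * N u.
  have dt_gt0 : 0 < t' - t by rewrite subr_gt0.
  have := ipnorm_dist ip_inner (x + t' *: u) (x + t *: u).
  by rewrite ipnorm_ray_dist // (gtr0_norm dt_gt0).
have gs'_le := mi_upper_near g_mi g_ge0 _ _ _ s_gt0 (ipnorm_ge0 ip _) near.
have gs_gt0 := g_gt0_off_origin x_neq0 _ (ltW s_gt0).
have gs'_gt0 := g_gt0_off_origin x_neq0 _ (ipnorm_ge0 ip (x + t' *: u)).
(* The ray leaves [x] slowly ([t * N u < s]), which makes [t / g s] increase strictly. *)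
have key : t * g s' < t' * g s.
  rewrite -(ltr_pM2r s_gt0).
  have := ler_wpM2l t_ge0 gs'_le.
  have : t * (s + (t' - t) * N u) < t' * s by nra.
  nra.
rewrite /rhoM ![N (x - _)]ipnormB // !ipnorm_ray // ger0_norm // gtr0_norm //.
rewrite ltr_pdivrMr // mulrAC ltr_pdivlMr //; nra.
Qed.

Lemma rhoM_star_shaped_origin : x = 0 -> (exists e : V, e <> 0) ->
  locally_star_shaped_at ip rho x.
Proof.
move=> x_eq0 [e e_neq0].
pose h s := s / g s.
have h_homo : forall s s', 0 <= s -> s <= s' -> h s <= h s' := divr_mi_homo g_mi g_ge0.
have rho_radial w : rho x w = h (N w) by rewrite /rhoM {1}x_eq0 sub0r ipnormN.
have Ne_gt0 := ipnorm_gt0 ip_inner e_neq0.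
have ge_gt0 : 0 < g (N e) by apply: g_gt0; rewrite x_eq0.
exists (h (N e)); split=> [|r r_gt0 lt_r_r0 u u_neq0]; first by rewrite divr_gt0.
have Nu_gt0 := ipnorm_gt0 ip_inner u_neq0.
have ray_norm t : 0 <= t -> N (x + t *: u) = t * N u.
  by move=> t_ge0; rewrite x_eq0 add0r ipnormZ // ger0_norm.
pose f t := rho x (x + t *: u).
have f0_lt : f 0 < r by rewrite /f scale0r addr0 rhoM_xx.
have far_ge t : N e / N u <= t -> r <= f t.
  move=> le_t; have t_ge0 : 0 <= t by apply: le_trans le_t; rewrite divr_ge0 ?ltW.
  rewrite /f rho_radial ray_norm //; apply: le_trans (ltW lt_r_r0) (h_homo _ _ _ _).
    exact: ltW.
  by move: le_t; rewrite ler_pdivrMr.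
have [c [c_ge0 _ above below]] := ray_threshold f0_lt far_ge.
apply: (ray_meets_boundary_once ip_inner c_ge0); first by rewrite rhoM_xx.
- move=> t t_ge0 lt_tc; have [t2 [lt_tt2 _ ft2_lt]] := below t lt_tc.
  exists ((t2 - t) * N u) => [|w near]; first by rewrite mulr_gt0 ?subr_gt0.
  have := ipnormD ip_inner (w - (x + t *: u)) (x + t *: u); rewrite subrK ray_norm // => Nw_le.
  have t2_ge0 : 0 <= t2 by lra.
  rewrite rho_radial; apply: le_lt_trans (h_homo _ (t2 * N u) (ipnorm_ge0 ip w) _) _.
    lra.
  by move: ft2_lt; rewrite /f rho_radial ray_norm.
- move=> t lt_ct; set t1 := (c + t) / 2.
  have [lt_ct1 lt_t1t] : c < t1 /\ t1 < t by split; rewrite /t1; lra.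
  have [t1_ge0 t_ge0] : 0 <= t1 /\ 0 <= t by split; lra.
  exists ((t - t1) * N u) => [|w near]; first by rewrite mulr_gt0 ?subr_gt0.
  have := ipnorm_dist ip_inner w (x + t *: u).
  rewrite ray_norm // ler_norml => /andP[Nw_ge _].
  rewrite rho_radial; apply: le_trans _ (h_homo (t1 * N u) (N w) _ _).
  - by have := above _ lt_ct1; rewrite /f rho_radial ray_norm.
  - exact: mulr_ge0 t1_ge0 (ltW Nu_gt0).
  - lra.
Qed.

Lemma rhoM_star_shaped_off_origin : x <> 0 -> locally_star_shaped_at ip rho x.
Proof.
move=> x_neq0; have a_gt0 := ipnorm_gt0 ip_inner x_neq0.
have g_pos y : 0 < g (N y) := g_gt0_off_origin x_neq0 _ (ipnorm_ge0 ip y).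
exists (N x / (4 * g (N x))); split=> [|r r_gt0 lt_r_r0 u u_neq0].
  by rewrite divr_gt0 ?mulr_gt0.
have Nu_gt0 := ipnorm_gt0 ip_inner u_neq0.
pose f t := rho x (x + t *: u).
have f0_lt : f 0 < r by rewrite /f scale0r addr0 rhoM_xx.
have far_ge t : N x / (3 * N u) <= t -> r <= f t.
  move=> le_t; have t_ge0 : 0 <= t by apply: le_trans le_t; rewrite divr_ge0 ?mulr_ge0 ?ltW.
  apply: le_trans (ltW lt_r_r0) (rhoM_far _ x_neq0 _).
  by move: le_t; rewrite ipnorm_ray // (ger0_norm t_ge0) ler_pdivrMr ?mulr_gt0 //; lra.
have [c [c_ge0 c_le above below]] := ray_threshold f0_lt far_ge.
have cNu_le : c * N u <= N x / 3.
  by move: c_le; rewrite ler_pdivlMr ?mulr_gt0 //; lra.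
have ray_pos t : 0 <= t -> 2 * (t * N u) < N x -> 0 < N (x + t *: u).
  by move=> t_ge0 small; have := ipnorm_ray_ge ip_inner x u t t_ge0; lra.
apply: (ray_meets_boundary_once ip_inner c_ge0); first by rewrite rhoM_xx.
- move=> t t_ge0 lt_tc; have [t2 [lt_tt2 _ ft2_lt]] := below t lt_tc.
  have small : 2 * (t * N u) < N x.
    have : t * N u < c * N u by rewrite ltr_pM2r.
    lra.
  apply: rhoM_lt_near (ray_pos _ t_ge0 small) (g_pos _) _.
  exact: lt_trans (rhoM_ray_lt u t t2 x_neq0 u_neq0 t_ge0 lt_tt2 small) ft2_lt.
- move=> t lt_ct; have t_gt0 := le_lt_trans c_ge0 lt_ct.
  have [small|big] := ltrP (2 * (t * N u)) (N x).
    set t1 := (c + t) / 2.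
    have [lt_ct1 lt_t1t] : c < t1 /\ t1 < t by split; rewrite /t1; lra.
    have t1_ge0 : 0 <= t1 by lra.
    have small1 : 2 * (t1 * N u) < N x.
      have : t1 * N u < t * N u by rewrite ltr_pM2r.
      lra.
    apply: rhoM_gt_near (ltW r_gt0) (ray_pos _ (ltW t_gt0) small) (g_pos _) _.
    exact: le_lt_trans (above _ lt_ct1) (rhoM_ray_lt u t1 t x_neq0 u_neq0 t1_ge0 lt_t1t small1).
  exists (N x / 6) => [|w near]; first by rewrite divr_gt0.
  apply: le_trans (ltW lt_r_r0) (rhoM_far _ x_neq0 _).
  have := ipnormD ip_inner (x + t *: u - w) (w - x).
  rewrite addrA subrK ipnorm_ray // (ger0_norm (ltW t_gt0)) [N (x + t *: u - w)]ipnormB //.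
  lra.
Qed.

End RhoMBalls.

Lemma rhoM_denom_gt0 {R : realType} {V : lmodType R} {ip : V -> V -> R} {M : R -> R -> R} :
  (forall s t, 0 <= s -> 0 <= t -> 0 <= M s t) -> is_metric (rhoM ip M) ->
  forall x y, x <> y -> 0 < M (ipnorm ip x) (ipnorm ip y).
Proof.
move=> M_ge0 [_ rho_eq0 _ _] x y x_neq_y.
rewrite lt_def M_ge0 ?ipnorm_ge0 // andbT; apply/eqP => M_eq0.
(* A vanishing denominator gives rho x y = N (x - y) / 0 = 0. *)
by apply/x_neq_y/rho_eq0; rewrite /rhoM M_eq0 invr0 mulr0.
Qed.

Theorem lemma5p4 (R : realType) (V : lmodType R) (ip : V -> V -> R)
  (M : R -> R -> R) :
  is_inner_product ip ->
  (exists x : V, x <> 0) ->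
  (forall s t, 0 <= s -> 0 <= t -> 0 <= M s t) ->
  (forall s t, 0 <= s -> 0 <= t -> M s t = M t s) ->
  moderately_increasing2 M ->
  is_metric (rhoM ip M) ->
  locally_star_shaped ip (rhoM ip M).
Proof.
move=> ip_inner nontrivial M_ge0 _ M_mi rho_metric x.
have [g_mi _] := M_mi _ (ipnorm_ge0 ip x).
have g_ge0 s : 0 <= s -> 0 <= M (ipnorm ip x) s := M_ge0 _ _ (ipnorm_ge0 ip x).
have g_gt0 y : y <> x -> 0 < M (ipnorm ip x) (ipnorm ip y).
  by move/nesym; exact: rhoM_denom_gt0.
have [x_eq0|/eqP x_neq0] := eqVneq x 0.
  exact: rhoM_star_shaped_origin ip_inner g_mi g_ge0 g_gt0 x_eq0 nontrivial.
exact: rhoM_star_shaped_off_origin ip_inner g_mi g_ge0 g_gt0 x_neq0.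
Qed.
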